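(* Under the model and standing assumption below, for every $n$, every admissible control $T^n\in\mathcal A^n$, and all $t\ge0$, one has $\hat W^n_t\ge\Gamma_1[\hat F^n](t)$.
   Context: Finite sets $\mathcal I$ (size $I$), $\mathcal K$ (size $K$), $\mathcal J\subset\mathcal I\times\mathcal K$ (size $J$); $\mathcal J_i=\{(i,k)\in\mathcal J\}$, $\mathcal J^k=\{(i,k)\in\mathcal J\}$. $\lambda_i,\mu_j\in(0,\infty)$; $R$ is $I\times J$ with $R_{ij}=\mu_j$ if $j\in\mathcal J_i$, else $0$; $G$ is $K\times J$ with $G_{kj}=1_{j\in\mathcal J^k}$. LP: minimize $\rho$ s.t. $R\xi=\lambda$, $G\xi\le\rho1_K$, $\xi\ge0$. Dual: maximize $y\cdot\lambda$ s.t. $\sum_kz_k=1$, $yR\le zG$, $z\ge0$. Standing assumption: LP optimal value $1$; every $\xi$ with $(\xi,1)$ optimal satisfies $(G\xi)_k=1$ for all $k$; the dual has a unique solution $(y^*,z^* )$. Model: rates $\lambda^n_i,\mu^n_j>0$ with $\hat\lambda^n_i:=n^{-1/2}(\lambda^n_i-n\lambda_i)\to\hat\lambda_i\in\mathbb R$, $\hat\mu^n_j:=n^{-1/2}(\mu^n_j-n\mu_j)\to\hat\mu_j\in\mathbb R$. Mutually independent renewal processes $\check A_i,\check S_j$ with right-continuous paths and IID strictly positive mean-1 interarrival times with finite squared coefficients of variation ($C^2_{A_i}>0$), and an independent random element $\Upsilon$ in a Polish space; $A^n_i(t)=\check A_i(\lambda^n_it)$, $S^n_j(t)=\check S_j(\mu^n_jt)$.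 An admissible control $T^n\in\mathcal A^n$ is a process $(T^n_j)_{j\in\mathcal J}$ with continuous nondecreasing $1$-Lipschitz paths, $T^n(0)=0$, such that with $D^n_j=S^n_j\circ T^n_j$, $X^n_i(t)=A^n_i(t)-\sum_{j\in\mathcal J_i}D^n_j(t)$, $I^n_k(t)=t-(GT^n(t))_k$, one has $X^n_i\ge0$, $I^n_k$ nondecreasing, and $T^n$ adapted to $\sigma\{A^n(s),D^n(s),s\le t;\Upsilon\}$. Define $\hat X^n=n^{-1/2}X^n$, $\hat W^n_t=y^*\cdot\hat X^n_t$, $\hat A^n_i(t)=n^{-1/2}(A^n_i(t)-\lambda^n_it)$, $\hat S^n_j(t)=n^{-1/2}(S^n_j(t)-\mu^n_jt)$, and $\hat F^n(t)=\sum_iy^*_i\big(\hat A^n_i(t)-\sum_{j\in\mathcal J_i}\hat S^n_j(T^n_j(t))+\hat\lambda^n_it-\sum_{j\in\mathcal J_i}\hat\mu^n_jT^n_j(t)\big)$. Skorohod map on the half line: for $\psi\in D_{\mathbb R}[0,\infty)$, $\Gamma_1[\psi](t)=\psi(t)+\sup_{0\le s\le t}\psi(s)^-$. *)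

From HB Require Import structures.
From mathcomp Require Import all_boot all_order all_algebra.
From mathcomp Require Import all_classical all_reals all_analysis.
Set Implicit Arguments. Unset Strict Implicit. Unset Printing Implicit Defensive.
Import Order.TTheory GRing.Theory Num.Theory.
Import numFieldNormedType.Exports.
Local Open Scope classical_set_scope.
Local Open Scope ring_scope.

(* Index sets.  I, K are finite types; the finite set J ⊂ I × K is encoded  *)
(* as a finite type J together with an injective map j |-> (jI j, jK j).    *)
(*   J_i = {j | jI j = i},   J^k = {j | jK j = k}.                          *)

Section LP.
Variables (R : realType) (I K J : finType) (jI : J -> I) (jK : J -> K).

Definition Rmat (mu : J -> R) (i : I) (j : J) : R := if jI j == i then mu j else 0.
Definition Gmat (k : K) (j : J) : R := if jK j == k then 1 else 0.

Definition lp_feasible (lam : I -> R) (mu : J -> R) (xi : J -> R) (rho : R) : Prop :=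
  (forall i, \sum_j Rmat mu i j * xi j = lam i) /\
  (forall k, \sum_j Gmat k j * xi j <= rho) /\
  (forall j, 0 <= xi j).

Definition lp_optimal lam mu xi rho : Prop :=
  lp_feasible lam mu xi rho /\
  forall xi' rho', lp_feasible lam mu xi' rho' -> rho <= rho'.

Definition dual_feasible (mu : J -> R) (y : I -> R) (z : K -> R) : Prop :=
  \sum_k z k = 1 /\
  (forall j, \sum_i y i * Rmat mu i j <= \sum_k z k * Gmat k j) /\
  (forall k, 0 <= z k).

Definition dual_optimal (lam : I -> R) (mu : J -> R) y z : Prop :=
  dual_feasible mu y z /\
  forall y' z', dual_feasible mu y' z' -> \sum_i y' i * lam i <= \sum_i y i * lam i.

Definition standing_assumption (lam : I -> R) (mu : J -> R)
    (ystar : I -> R) (zstar : K -> R) : Prop :=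
  (exists xi, lp_optimal lam mu xi 1) /\
  (forall xi, lp_optimal lam mu xi 1 -> forall k, \sum_j Gmat k j * xi j = 1) /\
  dual_optimal lam mu ystar zstar /\
  (forall y z, dual_optimal lam mu y z -> y = ystar /\ z = zstar).

End LP.

(* N is the (right-continuous) renewal counting path with interarrival      *)
(* times u_0, u_1, ... :  N(t) = #{k >= 1 : u_0 + ... + u_{k-1} <= t}.      *)
Definition renewal_path (R : realType) (u : nat -> R) (N : R -> nat) : Prop :=
  forall t, 0 <= t -> forall k : nat, (k <= N t)%N <-> \sum_(l < k) u l <= t.

Definition events_of d (Omega : measurableType d) d' (U : measurableType d')
    (X : Omega -> U) : set (set Omega) :=
  [set A | exists2 B, measurable B & A = X @^-1` B].

Definition mutually_independent d (Omega : measurableType d) (R : realType)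
    (P : probability Omega R) (iota : eqType) (E : iota -> set (set Omega)) : Prop :=
  forall (s : seq iota) (A : iota -> set Omega),
    uniq s -> (forall i, i \in s -> E i (A i)) ->
    P (\big[setI/setT]_(i <- s) A i) = (\prod_(i <- s) P (A i))%E.

Definition iid_interarrivals d (Omega : measurableType d) (R : realType)
    (P : probability Omega R) (u : nat -> Omega -> R) : Prop :=
  (forall l, measurable_fun setT (u l)) /\
  (forall l w, 0 < u l w) /\
  (forall l B, measurable B -> P (u l @^-1` B) = P (u 0%N @^-1` B)) /\
  ('E_P[u 0%N] = 1%:E)%E /\
  u 0%N \in Lfun P 2%:E.

Section Model.
Variables (R : realType) (I K J : finType) (jI : J -> I) (jK : J -> K).

Definition rsq (n : nat) : R := (Num.sqrt (n%:R : R))^-1.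

Definition An (checkA : I -> R -> nat) (lamn : I -> R) (i : I) (t : R) : R :=
  (checkA i (lamn i * t))%:R.
Definition Sn (checkS : J -> R -> nat) (mun : J -> R) (j : J) (t : R) : R :=
  (checkS j (mun j * t))%:R.
Definition Dn checkS mun (T : J -> R -> R) (j : J) (t : R) : R :=
  Sn checkS mun j (T j t).
Definition Xn checkA lamn checkS mun T (i : I) (t : R) : R :=
  An checkA lamn i t - \sum_(j | jI j == i) Dn checkS mun T j t.
Definition Idle (T : J -> R -> R) (k : K) (t : R) : R :=
  t - \sum_j Gmat R jK k j * T j t.

Definition What (n : nat) (ystar : I -> R) checkA lamn checkS mun T (t : R) : R :=
  \sum_i ystar i * (rsq n * Xn checkA lamn checkS mun T i t).

Definition Ahat (n : nat) checkA lamn (i : I) (t : R) : R :=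
  rsq n * (An checkA lamn i t - lamn i * t).
Definition Shat (n : nat) checkS mun (j : J) (t : R) : R :=
  rsq n * (Sn checkS mun j t - mun j * t).
Definition lamhat (n : nat) (lam lamn : I -> R) (i : I) : R :=
  rsq n * (lamn i - n%:R * lam i).
Definition muhat (n : nat) (mu mun : J -> R) (j : J) : R :=
  rsq n * (mun j - n%:R * mu j).

Definition Fhat (n : nat) (ystar : I -> R) (lam : I -> R) (mu : J -> R)
    checkA lamn checkS mun (T : J -> R -> R) (t : R) : R :=
  \sum_i ystar i *
    (Ahat n checkA lamn i t
     - \sum_(j | jI j == i) Shat n checkS mun j (T j t)
     + lamhat n lam lamn i * t
     - \sum_(j | jI j == i) muhat n mu mun j * T j t).

End Model.

(* (real supremum; the set is bounded for paths in D[0,oo)).                *)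
Definition Gamma1 (R : realType) (psi : R -> R) (t : R) : R :=
  psi t + sup [set Num.max (- psi s) 0 | s in [set s : R | 0 <= s <= t]].

Definition gen_events (R : realType) (I J : finType) d (Omega : measurableType d)
    d' (U : measurableType d')
    (A : I -> Omega -> R -> R) (D : J -> Omega -> R -> R) (Ups : Omega -> U)
    (t : R) : set (set Omega) :=
  [set E | (exists i s, 0 <= s <= t /\ events_of (fun w => A i w s) E) \/
           (exists j s, 0 <= s <= t /\ events_of (fun w => D j w s) E) \/
           events_of Ups E].

Definition admissible (R : realType) (I K J : finType) (jI : J -> I) (jK : J -> K)
    d (Omega : measurableType d) d' (U : measurableType d')
    (checkA : I -> Omega -> R -> nat) (checkS : J -> Omega -> R -> nat)
    (Ups : Omega -> U) (lamn : I -> R) (mun : J -> R)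
    (T : J -> Omega -> R -> R) : Prop :=
  let Tw w := fun j => T j w in
  (forall w j, T j w 0 = 0) /\
  (forall w j, {within [set t : R | 0 <= t], continuous (T j w)}) /\
  (forall w j s t, 0 <= s <= t -> T j w s <= T j w t) /\
  (forall w j s t, 0 <= s -> 0 <= t -> `|T j w t - T j w s| <= `|t - s|) /\
  (forall w i t, 0 <= t ->
     0 <= Xn jI (fun i => checkA i w) lamn (fun j => checkS j w) mun (Tw w) i t) /\
  (forall w k s t, 0 <= s <= t -> Idle jK (Tw w) k s <= Idle jK (Tw w) k t) /\
  (forall j t, 0 <= t -> forall B : set R, measurable B ->
     <<s gen_events
           (fun i w s => An (fun i => checkA i w) lamn i s)
           (fun j w s => Dn (fun j => checkS j w) mun (Tw w) j s)
           Ups t >> ((fun w => T j w t) @^-1` B)).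

From HB Require Import structures.
From mathcomp Require Import all_boot all_order all_algebra.
From mathcomp Require Import all_classical all_reals all_analysis.
From mathcomp Require Import ring lra.
Set Implicit Arguments. Unset Strict Implicit. Unset Printing Implicit Defensive.
Import Order.TTheory GRing.Theory Num.Theory.
Import numFieldNormedType.Exports.
Local Open Scope classical_set_scope.
Local Open Scope ring_scope.

(* Writing c = n^{-1/2} n, the definitions give hat W^n = hat F^n + c D with
   D(s) = y*.(lam s - R T^n(s)).  Since sum_k z*_k = 1,
     D(s) = (y*.lam - 1) s + sum_j (z*_{k(j)} - y*_{i(j)} mu_j) T^n_j(s) + z*.I^n(s),
   and every coefficient is nonnegative: y* R <= z* G by dual feasibility, and
   y*.lam >= 1 because the dual optimum dominates the primal value 1 (the hard
   half of LP duality, obtained from Farkas' lemma by Fourier-Motzkin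
   elimination).  As T^n and I^n are nondecreasing and vanish at 0, c D is
   nondecreasing and nonnegative; and hat W^n >= 0 because y* >= 0 and X^n >= 0.
   The minimality of the Skorohod map then gives Gamma_1[hat F^n] <= hat W^n. *)

Section Farkas.
Variable R : realFieldType.

Lemma sum_indicator (C : finType) (p : C) (f : C -> R) :
  \sum_c (c == p)%:R * f c = f p.
Proof.
rewrite (bigD1 p) //= eqxx mul1r big1 ?addr0 // => c /negbTE ->.
by rewrite mul0r.
Qed.

Lemma sum_mulr_exchange (C C' : Type) (r : seq C) (r' : seq C')
    (m : C' -> R) (w : C' -> C -> R) (f : C -> R) :
  \sum_(c <- r) (\sum_(c' <- r') m c' * w c' c) * f c
  = \sum_(c' <- r') m c' * \sum_(c <- r) w c' c * f c.
Proof.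
under eq_bigr do rewrite mulr_suml.
rewrite exchange_big /=; apply: eq_bigr => c' _.
by rewrite mulr_sumr; apply: eq_bigr => c _; rewrite mulrA.
Qed.

Lemma scalar_ineqs_solvable (C : finType) (al r : C -> R) :
  (forall p q, 0 < al p -> al q < 0 -> 0 <= - al q * r p + al p * r q) ->
  (forall c, al c = 0 -> 0 <= r c) ->
  exists t, forall c, al c * t <= r c.
Proof.
move=> pos_neg zero.
(* [M] dominates every ratio [r c / al c]: the default when no [al p > 0]. *)
pose M := \sum_c `|r c / al c|.
pose t := \big[Order.min/M]_(p | 0 < al p) (r p / al p).
exists t => c; have [c_lt0|c_gt0|c0] := ltgtP (al c) 0; last by rewrite c0 mul0r zero.
- suff: r c / al c <= t by rewrite ler_ndivrMr // mulrC.
  rewrite /t; elim/big_rec: _ => [|p x p_gt0 le_x].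
    by rewrite /M (bigD1 c) //= (le_trans (ler_norm _)) // lerDl sumr_ge0.
  rewrite le_min le_x andbT.
  have := pos_neg p c p_gt0 c_lt0.
  set u := r c / al c; set v := r p / al p.
  have -> : r c = u * al c by rewrite /u divfK // lt_eqF.
  have -> : r p = v * al p by rewrite /v divfK // gt_eqF.
  have : 0 < al p * - al c by rewrite mulr_gt0 // oppr_gt0.
  nra.
- suff: t <= r c / al c by rewrite ler_pdivlMr // mulrC.
  by rewrite /t (bigD1 c) //= ge_min lexx.
Qed.

Section FourierMotzkin.
Variables (C : finType) (al : C -> R).

(* Rows of the system after eliminating the variable with coefficients [al]:
   a row [p] with [al p > 0] combined with a row [q] with [al q < 0], and each
   row not involving the variable. *)
Definition fm_weight (c' : (C * C) + C) (c : C) : R :=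
  match c' with
  | inl (p, q) => if (0 < al p) && (al q < 0)
                  then - al q * (c == p)%:R + al p * (c == q)%:R else 0
  | inr c0 => if al c0 == 0 then (c == c0)%:R else 0
  end.

Lemma sum_fm_weight c' (f : C -> R) :
  \sum_c fm_weight c' c * f c =
  match c' with
  | inl (p, q) => if (0 < al p) && (al q < 0) then - al q * f p + al p * f q else 0
  | inr c0 => if al c0 == 0 then f c0 else 0
  end.
Proof.
case: c' => [[p q]|c0] /=; case: ifP => _; rewrite ?sum_indicator //;
  try by rewrite big1 // => c _; rewrite mul0r.
rewrite -!sum_indicator !mulr_sumr -big_split /=.
by apply: eq_bigr => c _; ring.
Qed.

Lemma fm_weight_ge0 c' c : 0 <= fm_weight c' c.
Proof.
case: c' => [[p q]|c0] /=; case: ifP => // /andP [p_gt0 q_lt0].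
by rewrite addr_ge0 // mulr_ge0 // ?ler0n // ?oppr_ge0 ltW.
Qed.

Lemma fm_weight_elim c' : \sum_c fm_weight c' c * al c = 0.
Proof.
rewrite sum_fm_weight; case: c' => [[p q]|c0]; case: ifP => //.
  by move=> _; ring.
by move/eqP.
Qed.

Lemma fm_weight_solvable (r : C -> R) :
  (forall c', 0 <= \sum_c fm_weight c' c * r c) ->
  exists t, forall c, al c * t <= r c.
Proof.
move=> comb_ge0; apply: scalar_ineqs_solvable => [p q p_gt0 q_lt0|c c0].
  by have := comb_ge0 (inl (p, q)); rewrite sum_fm_weight p_gt0 q_lt0.
by have := comb_ge0 (inr c); rewrite sum_fm_weight c0 eqxx.
Qed.

End FourierMotzkin.

Lemma farkas_seq (V : eqType) (s : seq V) (C : finType) (a : C -> V -> R)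
    (b : C -> R) :
  uniq s ->
  ~ (exists x : V -> R, forall c, \sum_(u <- s) a c u * x u <= b c) ->
  exists m : C -> R, [/\ forall c, 0 <= m c,
    forall u, u \in s -> \sum_c m c * a c u = 0 & \sum_c m c * b c < 0].
Proof.
elim: s C a b => [|v s IH] C a b /=.
  move=> _ infeas; have [c b_lt0] : exists c, b c < 0.
    apply: contrapT => no_neg; apply: infeas; exists (fun=> 0) => c.
    by rewrite big_nil leNgt; apply/negP => b_lt0; apply: no_neg; exists c.
  by exists (fun c' => (c' == c)%:R); split=> //; rewrite sum_indicator.
case/andP=> v_notin_s uniq_s infeas.
pose w := fm_weight (fun c => a c v).
have [|m [m_ge0 m_a m_b]] := IH _ (fun c' u => \sum_c w c' c * a c u)
    (fun c' => \sum_c w c' c * b c) uniq_s.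
  move=> [x x_sol]; apply: infeas.
  have [t t_sol] : exists t, forall c,
      a c v * t <= b c - \sum_(u <- s) a c u * x u.
    apply: fm_weight_solvable => c'; have := x_sol c'.
    rewrite sum_mulr_exchange; under [X in _ -> _ <= X]eq_bigr do rewrite mulrBr.
    by rewrite sumrB subr_ge0.
  exists (fun u => if u == v then t else x u) => c.
  rewrite big_cons eqxx (eq_big_seq (fun u => a c u * x u)).
    by rewrite -lerBrDr.
  by move=> u u_in_s; case: eqP u_in_s v_notin_s => // ->->.
exists (fun c => \sum_c' m c' * w c' c); split.
- by move=> c; apply: sumr_ge0 => c' _; rewrite mulr_ge0 ?fm_weight_ge0.
- move=> u; rewrite in_cons sum_mulr_exchange => /predU1P [->|/m_a //].
  by rewrite big1 // => c' _; rewrite fm_weight_elim mulr0.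
- by rewrite sum_mulr_exchange.
Qed.

Lemma farkas (V C : finType) (a : C -> V -> R) (b : C -> R) :
  ~ (exists x : V -> R, forall c, \sum_u a c u * x u <= b c) ->
  exists m : C -> R, [/\ forall c, 0 <= m c,
    forall u, \sum_c m c * a c u = 0 & \sum_c m c * b c < 0].
Proof.
move=> infeas; have [m [m_ge0 m_a m_b]] := farkas_seq (index_enum_uniq V) infeas.
by exists m; split=> // u; rewrite m_a ?mem_index_enum.
Qed.

End Farkas.

Section LPDuality.
Variables (R : realType) (I K J : finType) (jI : J -> I) (jK : J -> K).
Variables (lam : I -> R) (mu : J -> R).

Lemma sum_Rmat (y : I -> R) j : \sum_i y i * Rmat jI mu i j = y (jI j) * mu j.
Proof.
rewrite (bigD1 (jI j)) //= /Rmat eqxx big1 ?addr0 // => i.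
by rewrite eq_sym => /negbTE ->; rewrite mulr0.
Qed.

Lemma sum_Gmat (z : K -> R) j : \sum_k z k * Gmat R jK k j = z (jK j).
Proof.
rewrite (bigD1 (jK j)) //= /Gmat eqxx mulr1 big1 ?addr0 // => k.
by rewrite eq_sym => /negbTE ->; rewrite mulr0.
Qed.

Lemma weak_duality xi rho (y : I -> R) (z : K -> R) :
  lp_feasible jI jK lam mu xi rho ->
  (forall j, \sum_i y i * Rmat jI mu i j <= \sum_k z k * Gmat R jK k j) ->
  (forall k, 0 <= z k) ->
  \sum_i y i * lam i <= rho * \sum_k z k.
Proof.
move=> [R_xi [G_xi xi_ge0]] yR_le_zG z_ge0.
have -> : \sum_i y i * lam i = \sum_j (\sum_i y i * Rmat jI mu i j) * xi j.
  by rewrite sum_mulr_exchange; apply: eq_bigr => i _; rewrite R_xi.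
apply: le_trans (_ : \sum_j (\sum_k z k * Gmat R jK k j) * xi j <= _).
  by apply: ler_sum => j _; rewrite ler_wpM2r.
rewrite sum_mulr_exchange mulr_sumr; apply: ler_sum => k _.
by rewrite mulrC ler_wpM2r.
Qed.

(* The LP constraints together with [rho <= s], as a system [a (xi, rho) <= b]:
   [R xi <= lam], [- R xi <= - lam], [G xi - rho <= 0], [- xi <= 0], [rho <= s]. *)
Definition lp_ineqs (c : ((I + I) + (K + J)) + unit) (u : J + unit) : R :=
  match c, u with
  | inl (inl (inl i)), inl j => Rmat jI mu i j
  | inl (inl (inr i)), inl j => - Rmat jI mu i j
  | inl (inr (inl k)), inl j => Gmat R jK k j
  | inl (inr (inl k)), inr _ => -1
  | inl (inr (inr j0)), inl j => - (j == j0)%:R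
  | inr _, inr _ => 1
  | _, _ => 0
  end.

Definition lp_ineqs_rhs (s : R) (c : ((I + I) + (K + J)) + unit) : R :=
  match c with
  | inl (inl (inl i)) => lam i
  | inl (inl (inr i)) => - lam i
  | inl (inr _) => 0
  | inr _ => s
  end.

Lemma sum_lp_vars (f : J + unit -> R) : \sum_u f u = \sum_j f (inl j) + f (inr tt).
Proof. by rewrite big_sumType /= (big_pred1 tt) //; case. Qed.

Lemma lp_ineqs_feasible s (x : J + unit -> R) :
  (forall c, \sum_u lp_ineqs c u * x u <= lp_ineqs_rhs s c) ->
  lp_feasible jI jK lam mu (fun j => x (inl j)) (x (inr tt)) /\ x (inr tt) <= s.
Proof.
move=> x_sol; split; last first.
  have := x_sol (inr tt); rewrite sum_lp_vars /= mul1r big1 ?add0r // => j _.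
  by rewrite mul0r.
split; [move=> i | split=> [k|j]].
- apply/eqP; rewrite eq_le.
  have := x_sol (inl (inl (inl i))); have := x_sol (inl (inl (inr i))).
  rewrite !sum_lp_vars /= !mul0r !addr0.
  under eq_bigr do rewrite mulNr.
  by rewrite sumrN lerN2 => -> ->.
- have := x_sol (inl (inr (inl k))); rewrite sum_lp_vars /= mulN1r.
  by rewrite subr_le0.
- have := x_sol (inl (inr (inr j))); rewrite sum_lp_vars /= mul0r addr0.
  under eq_bigr do rewrite mulNr.
  by rewrite sumrN sum_indicator oppr_le0.
Qed.

Lemma lp_infeasible_certificate (s : R) :
  (forall xi rho, lp_feasible jI jK lam mu xi rho -> s < rho) ->
  exists y z, [/\ forall j, \sum_i y i * Rmat jI mu i j <= \sum_k z k * Gmat R jK k j,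
    forall k, 0 <= z k & s * \sum_k z k < \sum_i y i * lam i].
Proof.
move=> lp_gt; have [|m [m_ge0 m_a m_b]] := farkas (a := lp_ineqs) (b := lp_ineqs_rhs s).
  by move=> [x /lp_ineqs_feasible [/lp_gt]]; rewrite ltNge => /negP.
have sum_rows (f : ((I + I) + (K + J)) + unit -> R) : \sum_c f c =
    \sum_i f (inl (inl (inl i))) + \sum_i f (inl (inl (inr i)))
    + \sum_k f (inl (inr (inl k))) + \sum_j f (inl (inr (inr j))) + f (inr tt).
  by rewrite !big_sumType /= (big_pred1 tt) ?addrA //; case.
pose p i := m (inl (inl (inl i))); pose q i := m (inl (inl (inr i))).
pose z k := m (inl (inr (inl k))); pose v j := m (inl (inr (inr j))).
exists (fun i => q i - p i), z; split=> [j|k|].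
- have := m_a (inl j); rewrite sum_rows /= mulr0 addr0.
  have -> : \sum_j0 v j0 * - (j == j0)%:R = - v j.
    rewrite -(sum_indicator j v) -sumrN; apply: eq_bigr => j0 _.
    by rewrite eq_sym mulrN mulrC.
  under [\sum_i q i * _]eq_bigr do rewrite mulrN.
  rewrite sumrN !sum_Rmat sum_Gmat mulrBl.
  by have := m_ge0 (inl (inr (inr j))); rewrite /p /q /z /v; lra.
- exact: m_ge0.
- have sum_z : \sum_k z k = m (inr tt).
    have := m_a (inr tt); rewrite sum_rows /= -!mulr_suml !mulr0 mulr1 mulrN1.
    lra.
  have := m_b; rewrite sum_rows /= -!mulr_suml !mulr0 sum_z.
  under [\sum_i q i * _]eq_bigr do rewrite mulrN.
  under [\sum_i (q i - p i) * _]eq_bigr do rewrite mulrBl.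
  by rewrite sumrN sumrB /p /q; lra.
Qed.

Lemma dual_optimal_ge0 y z : (forall i, 0 < lam i) ->
  dual_optimal jI jK lam mu y z -> forall i, 0 <= y i.
Proof.
move=> lam_gt0 [[z_sum [yR_le_zG z_ge0]] y_opt] i0; rewrite leNgt; apply/negP => y_lt0.
pose y' i := if i == i0 then 0 else y i.
have y'_feas : dual_feasible jI jK mu y' z.
  split=> //; split=> // j; rewrite sum_Rmat /y'; case: eqP => _.
    by rewrite mul0r sum_Gmat z_ge0.
  by rewrite -sum_Rmat.
have := y_opt _ _ y'_feas.
rewrite (bigD1 i0) //= [leRHS](bigD1 i0) //= /y' eqxx mul0r add0r.
rewrite (eq_bigr (fun i => y i * lam i)) => [|i /negbTE -> //].
by have := lam_gt0 i0; nra.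
Qed.

Lemma lp_value_le_dual_value xi rho y z :
  lp_optimal jI jK lam mu xi rho -> dual_optimal jI jK lam mu y z ->
  rho <= \sum_i y i * lam i.
Proof.
move=> [xi_feas xi_opt] [_ y_opt]; rewrite leNgt; apply/negP => dual_lt.
have lp_gt xi' rho' : lp_feasible jI jK lam mu xi' rho' -> \sum_i y i * lam i < rho'.
  by move/xi_opt; apply: lt_le_trans.
have [y' [z' [y'R_le_z'G z'_ge0 y'_gt]]] := lp_infeasible_certificate lp_gt.
have := weak_duality xi_feas y'R_le_z'G z'_ge0.
set sz := \sum_k z' k => y'_le.
have sz_gt0 : 0 < sz.
  have gap_gt0 : 0 < rho - \sum_i y i * lam i by rewrite subr_gt0.
  by rewrite -(pmulr_rgt0 _ gap_gt0) mulrBl subr_gt0 (lt_le_trans y'_gt).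
have normalized : dual_feasible jI jK mu (fun i => y' i / sz) (fun k => z' k / sz).
  split; [by rewrite -mulr_suml divff ?gt_eqF | split=> [j|k]].
    by have := y'R_le_z'G j; rewrite !sum_Rmat !sum_Gmat mulrAC ler_pM2r ?invr_gt0.
  by rewrite divr_ge0 ?z'_ge0 ?ltW.
have := y_opt _ _ normalized.
have -> : \sum_i y' i / sz * lam i = (\sum_i y' i * lam i) / sz.
  by rewrite mulr_suml; apply: eq_bigr => i _; rewrite mulrAC.
by rewrite ler_pdivrMr // leNgt y'_gt.
Qed.
End LPDuality.

Lemma Gamma1_minimal (R : realType) (psi Y : R -> R) (t : R) : 0 <= t ->
  (forall s, 0 <= s <= t -> 0 <= psi s + Y s) ->
  (forall s, 0 <= s <= t -> 0 <= Y s <= Y t) ->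
  Gamma1 psi t <= psi t + Y t.
Proof.
move=> t_ge0 psiY_ge0 Y_le; rewrite /Gamma1 lerD2l; apply: ge_sup.
  by exists (Num.max (- psi 0) 0), 0; rewrite //= lexx t_ge0.
move=> _ [s s_in <-]; have /andP [Ys_ge0 Ys_le] := Y_le s s_in.
rewrite ge_max; apply/andP; split; last exact: le_trans Ys_le.
by have := psiY_ge0 s s_in; lra.
Qed.

Section FluidWorkload.
Variables (R : realType) (I K J : finType) (jI : J -> I) (jK : J -> K).
Variables (ystar lam : I -> R) (mu : J -> R) (T : J -> R -> R).

Definition fluid_workload (s : R) : R :=
  \sum_i ystar i * (lam i * s - \sum_(j | jI j == i) mu j * T j s).

Lemma What_Fhat n checkA lamn checkS mun s :
  What jI n ystar checkA lamn checkS mun T s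
  = Fhat jI n ystar lam mu checkA lamn checkS mun T s
    + rsq R n * n%:R * fluid_workload s.
Proof.
rewrite /What /Fhat /fluid_workload mulr_sumr -big_split /=.
apply: eq_bigr => i _; rewrite [X in _ = _ + X]mulrCA -mulrDr; congr (_ * _).
rewrite /Xn /Ahat /lamhat /Shat /muhat /Dn.
set rn := rsq R n; set S := \sum_(j | _) _.
set MT := \sum_(j | jI j == i) mun j * T j s.
have -> : \sum_(j | jI j == i) rn * (Sn checkS mun j (T j s) - mun j * T j s)
    = rn * S - rn * MT.
  by rewrite !mulr_sumr -sumrB; apply: eq_bigr => j _; rewrite mulrBr.
have -> : \sum_(j | jI j == i) rn * (mun j - n%:R * mu j) * T j s
    = rn * MT - rn * n%:R * \sum_(j | jI j == i) mu j * T j s.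
  by rewrite !mulr_sumr -sumrB; apply: eq_bigr => j _; ring.
ring.
Qed.

Lemma fluid_workload_idle (z : K -> R) s : \sum_k z k = 1 ->
  fluid_workload s = (\sum_i ystar i * lam i - 1) * s
    + \sum_j (z (jK j) - ystar (jI j) * mu j) * T j s
    + \sum_k z k * Idle jK T k s.
Proof.
move=> z_sum.
have -> : \sum_k z k * Idle jK T k s = s - \sum_j z (jK j) * T j s.
  under eq_bigr do rewrite mulrBr.
  rewrite sumrB -mulr_suml z_sum mul1r -sum_mulr_exchange.
  by congr (_ - _); apply: eq_bigr => j _; rewrite sum_Gmat.
have -> : fluid_workload s
    = (\sum_i ystar i * lam i) * s - \sum_j ystar (jI j) * mu j * T j s.
  rewrite /fluid_workload [X in _ = _ - X](partition_big jI predT) //= mulr_suml.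
  under eq_bigr do rewrite mulrBr mulrA mulr_sumr.
  rewrite sumrB; congr (_ - _); apply: eq_bigr => i _.
  by apply: eq_bigr => j /eqP <-; rewrite mulrA.
under [\sum_j (_ - _) * _]eq_bigr do rewrite mulrBl.
by rewrite sumrB; ring.
Qed.

Lemma fluid_workload0 : (forall j, T j 0 = 0) -> fluid_workload 0 = 0.
Proof.
move=> T0; rewrite /fluid_workload big1 // => i _.
by rewrite mulr0 big1 ?subrr ?mulr0 // => j _; rewrite T0 mulr0.
Qed.

Lemma fluid_workload_le (z : K -> R) :
  dual_feasible jI jK mu ystar z -> 1 <= \sum_i ystar i * lam i ->
  (forall j s t, 0 <= s <= t -> T j s <= T j t) ->
  (forall k s t, 0 <= s <= t -> Idle jK T k s <= Idle jK T k t) ->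
  forall s t, 0 <= s <= t -> fluid_workload s <= fluid_workload t.
Proof.
move=> [z_sum [yR_le_zG z_ge0]] y_lam T_le Idle_le s t st.
rewrite !(fluid_workload_idle _ z_sum); apply: lerD; first apply: lerD.
- by rewrite ler_wpM2l ?subr_ge0 //; case/andP: st.
- apply: ler_sum => j _; rewrite ler_wpM2l ?T_le //.
  by have := yR_le_zG j; rewrite sum_Rmat sum_Gmat subr_ge0.
- by apply: ler_sum => k _; rewrite ler_wpM2l ?Idle_le.
Qed.

End FluidWorkload.

Theorem lemma4p1
  (R : realType) (I K J : finType) (jI : J -> I) (jK : J -> K)
  (* J ⊂ I × K *)
  (HJ : injective (fun j => (jI j, jK j)))
  (lam : I -> R) (mu : J -> R)
  (Hlam : forall i, 0 < lam i) (Hmu : forall j, 0 < mu j)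
  (ystar : I -> R) (zstar : K -> R)
  (Hstand : standing_assumption jI jK lam mu ystar zstar)
  (* rates of the n-th system and their second-order behaviour *)
  (lamn : nat -> I -> R) (mun : nat -> J -> R)
  (Hlamn : forall n i, 0 < lamn n i) (Hmun : forall n j, 0 < mun n j)
  (lamhat_lim : I -> R) (muhat_lim : J -> R)
  (Hlamhat : forall i, (fun n => lamhat n lam (lamn n) i) @ \oo --> lamhat_lim i)
  (Hmuhat : forall j, (fun n => muhat n mu (mun n) j) @ \oo --> muhat_lim j)
  (* probability space and primitives *)
  (d : measure_display) (Omega : measurableType d) (P : probability Omega R)
  (uA : I -> nat -> Omega -> R) (uS : J -> nat -> Omega -> R)
  (d' : measure_display) (U : measurableType d') (Ups : Omega -> U)
  (HUps : measurable_fun setT Ups)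
  (HuA : forall i, iid_interarrivals P (uA i))
  (HuS : forall j, iid_interarrivals P (uS j))
  (HCA : forall i, (0 < 'V_P[uA i 0%N])%E)
  (Hindep : mutually_independent P
     (fun x : ((I * nat) + (J * nat)) + unit =>
        match x with
        | inl (inl (i, l)) => events_of (uA i l)
        | inl (inr (j, l)) => events_of (uS j l)
        | inr _ => events_of Ups
        end))
  (checkA : I -> Omega -> R -> nat) (checkS : J -> Omega -> R -> nat)
  (HcheckA : forall i w, renewal_path (fun l => uA i l w) (checkA i w))
  (HcheckS : forall j w, renewal_path (fun l => uS j l w) (checkS j w)) :
  forall (n : nat), (0 < n)%N ->
  forall T : J -> Omega -> R -> R,
    admissible jI jK checkA checkS Ups (lamn n) (mun n) T ->
  forall (w : Omega) (t : R), 0 <= t ->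
    Gamma1 (Fhat jI n ystar lam mu (fun i => checkA i w) (lamn n)
                 (fun j => checkS j w) (mun n) (fun j => T j w)) t
    <= What jI n ystar (fun i => checkA i w) (lamn n)
                 (fun j => checkS j w) (mun n) (fun j => T j w) t.
Proof.
move=> n _ T [T0 [_ [T_le [_ [X_ge0 [Idle_le _]]]]]] w t t_ge0.
have [[xi xi_opt] [_ [y_opt _]]] := Hstand.
have y_ge0 := dual_optimal_ge0 Hlam y_opt.
have y_lam_ge1 := lp_value_le_dual_value xi_opt y_opt.
have rn_ge0 : 0 <= rsq R n by rewrite invr_ge0 sqrtr_ge0.
pose D := fluid_workload jI ystar lam mu (fun j => T j w).
have D_le s1 s2 : 0 <= s1 <= s2 -> D s1 <= D s2.
  by apply: (fluid_workload_le y_opt.1 y_lam_ge1 (T_le w) (Idle_le w)).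
have D0 : D 0 = 0 := fluid_workload0 jI ystar lam mu (T0 w).
have D_ge0 s : 0 <= s -> 0 <= D s.
  by move=> s_ge0; rewrite -D0 D_le ?lexx.
rewrite (What_Fhat jI ystar lam mu).
apply: (Gamma1_minimal (Y := fun s => rsq R n * n%:R * D s)) => // s /andP [s_ge0 s_le].
- rewrite -(What_Fhat jI ystar lam mu); apply: sumr_ge0 => i _.
  by rewrite !mulr_ge0 ?X_ge0.
- by rewrite !mulr_ge0 ?D_ge0 //= ler_wpM2l ?mulr_ge0 ?D_le ?s_ge0.
Qed.
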